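(* Let $A\subset\mathcal L$ with $|A|=M$, $1\le M<N$, and let $U$ be an $N\times N$ unitary matrix with entries $U_{y,z}=\frac{1}{\sqrt N}\alpha(y,z)$. Let $\xi(z)=\frac{1}{\sqrt N}(-1)^{\mathbf 1_A(z)}$ and let $\psi_k$ be the amplified state described in the context. Fix $y$ with $\sum_{z=0}^{N-1}\alpha(y,z)=0$ and $\sum_{z\in A}\alpha(y,z)\neq0$. Then $$\frac{(U\psi_k)(y)}{(U\xi)(y)}=-\frac{N}{2M}\tan\theta\,\sin(2k\theta),\qquad\text{so}\qquad \frac{|(U\psi_k)(y)|^2}{|(U\xi)(y)|^2}=\frac{N^2}{4M^2}\tan^2\theta\sin^2(2k\theta),$$ and if moreover $M\le N/2$ this ratio lies between $\frac{N}{4M}\frac{N}{N-M}(1-\frac{2M}{N})^2$ and $\frac{N}{4M}\frac{N}{N-M}$.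
   Context: $\mathcal L=\{0,1,\dots,N-1\}$, $N\ge2$. $\theta\in(0,\pi/2)$ with $\sin\theta=\sqrt{M/N}$, $k=\lfloor\pi/(4\theta)\rfloor$, $a_k=\frac{\sin((2k+1)\theta)}{\sqrt M}$, $b_k=\frac{\cos((2k+1)\theta)}{\sqrt{N-M}}$, and $\psi_k(z)=a_k$ for $z\in A$, $\psi_k(z)=b_k$ for $z\notin A$. $\mathbf 1_A$ is the indicator function of $A$. *)

From Stdlib Require Import Reals Lra ZArith.
Open Scope R_scope.

Definition Cplx : Type := (R * R)%type.
Definition RtoC (x : R) : Cplx := (x, 0).
Definition C0 : Cplx := (0, 0).
Definition C1 : Cplx := (1, 0).
Definition Cplus (u v : Cplx) : Cplx := (fst u + fst v, snd u + snd v).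
Definition Cmult (u v : Cplx) : Cplx :=
  (fst u * fst v - snd u * snd v, fst u * snd v + snd u * fst v).
Definition Cconj (u : Cplx) : Cplx := (fst u, - snd u).
Definition Cnorm2 (u : Cplx) : R := fst u * fst u + snd u * snd u.
Definition Cinv (u : Cplx) : Cplx := (fst u / Cnorm2 u, - snd u / Cnorm2 u).
Definition Cdiv (u v : Cplx) : Cplx := Cmult u (Cinv v).

Fixpoint Csum (n : nat) (f : nat -> Cplx) : Cplx :=
  match n with
  | O => C0
  | S m => Cplus (Csum m f) (f m)
  end.

(* Subsets A of L = {0,...,N-1} are boolean predicates on nat (only values < N matter). *)
Fixpoint card_below (n : nat) (A : nat -> bool) : nat :=
  match n with
  | O => O
  | S m => (card_below m A + (if A m then 1 else 0))%nat
  end.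

Definition ind (A : nat -> bool) (z : nat) : nat := if A z then 1%nat else 0%nat.

Definition Umat (N : nat) (alpha : nat -> nat -> Cplx) (y z : nat) : Cplx :=
  Cmult (RtoC (/ sqrt (INR N))) (alpha y z).

Definition unitary (N : nat) (U : nat -> nat -> Cplx) : Prop :=
  (forall y y', (y < N)%nat -> (y' < N)%nat ->
     Csum N (fun z => Cmult (U y z) (Cconj (U y' z))) = if Nat.eqb y y' then C1 else C0) /\
  (forall z z', (z < N)%nat -> (z' < N)%nat ->
     Csum N (fun y => Cmult (Cconj (U y z)) (U y z')) = if Nat.eqb z z' then C1 else C0).

Definition apply (N : nat) (U : nat -> nat -> Cplx) (v : nat -> Cplx) (y : nat) : Cplx :=
  Csum N (fun z => Cmult (U y z) (v z)).

(* k = floor(pi / (4 theta));  Int_part is the floor function of Stdlib *)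
Definition kk (theta : R) : nat := Z.to_nat (Int_part (PI / (4 * theta))).

Definition a_k (M : nat) (theta : R) (k : nat) : R :=
  sin ((2 * INR k + 1) * theta) / sqrt (INR M).
Definition b_k (N M : nat) (theta : R) (k : nat) : R :=
  cos ((2 * INR k + 1) * theta) / sqrt (INR (N - M)).

Definition psi_k (N M : nat) (A : nat -> bool) (theta : R) (k : nat) (z : nat) : Cplx :=
  RtoC (if A z then a_k M theta k else b_k N M theta k).

Definition xi (N : nat) (A : nat -> bool) (z : nat) : Cplx :=
  RtoC (/ sqrt (INR N) * (-1) ^ (ind A z)).

(* Both vectors psi_k and xi take one value on A and another off A.  Since the
   row y of U sums to zero, applying U to such a vector (p on A, q off A) gives
   (p - q)/sqrt N times S := sum_{z in A} alpha(y,z), so the quotient is the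
   real number (a_k - b_k) / (-2/sqrt N).  Writing M = N sin^2 theta turns it
   into -sin(2 k theta) / sin(2 theta); the choice of k forces
   pi/2 - 2 theta < 2 k theta <= pi/2, whence cos(2 theta) <= sin(2 k theta) <= 1. *)

From Pilot Require Import Defs.
From Stdlib Require Import Reals ZArith Lra Psatz.
Open Scope R_scope.

Lemma Csum_ext (n : nat) (f g : nat -> Cplx) :
  (forall z, f z = g z) -> Csum n f = Csum n g.
Proof. intros H; induction n; simpl; [reflexivity | now rewrite IHn, H]. Qed.

Lemma Csum_scaled_two_valued (n : nat) (A : nat -> bool) (f : nat -> Cplx) (c p q : R) :
  Csum n (fun z => Cmult (Cmult (RtoC c) (f z)) (RtoC (if A z then p else q))) =
  Cmult (RtoC c) (Cplus (Cmult (RtoC (p - q)) (Csum n (fun z => if A z then f z else C0)))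
                        (Cmult (RtoC q) (Csum n f))).
Proof.
  induction n as [|n IH]; simpl.
  - unfold Cmult, Cplus, RtoC, C0; simpl; f_equal; ring.
  - rewrite IH; destruct (A n); unfold Cmult, Cplus, RtoC, C0; simpl; f_equal; ring.
Qed.

Lemma apply_Umat_two_valued (N : nat) (alpha : nat -> nat -> Cplx) (A : nat -> bool)
    (v : nat -> Cplx) (p q : R) (y : nat) :
  (forall z, v z = RtoC (if A z then p else q)) ->
  Csum N (alpha y) = C0 ->
  apply N (Umat N alpha) v y =
  Cmult (RtoC ((p - q) / sqrt (INR N))) (Csum N (fun z => if A z then alpha y z else C0)).
Proof.
  intros hv hrow; unfold apply, Umat.
  rewrite (Csum_ext N _ (fun z => Cmult (Cmult (RtoC (/ sqrt (INR N))) (alpha y z))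
                                        (RtoC (if A z then p else q))))
    by (intros z; now rewrite hv).
  rewrite Csum_scaled_two_valued, hrow.
  destruct (Csum _ _); unfold Cmult, Cplus, RtoC, C0; simpl; f_equal; unfold Rdiv; ring.
Qed.

Lemma xi_two_valued (N : nat) (A : nat -> bool) (z : nat) :
  xi N A z = RtoC (if A z then - / sqrt (INR N) else / sqrt (INR N)).
Proof. unfold xi, Defs.ind; destruct (A z); simpl; f_equal; ring. Qed.

Lemma Cnorm2_pos (u : Cplx) : u <> C0 -> 0 < Cnorm2 u.
Proof.
  destruct u as [x y]; intros hu; unfold Cnorm2; simpl.
  destruct (Req_dec x 0), (Req_dec y 0); subst; try (exfalso; now apply hu); nra.
Qed.

Lemma Cnorm2_scale (r : R) (u : Cplx) : Cnorm2 (Cmult (RtoC r) u) = r ^ 2 * Cnorm2 u.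
Proof. destruct u; unfold Cnorm2, Cmult, RtoC; simpl; ring. Qed.

Lemma Cdiv_scale (r s : R) (u : Cplx) : u <> C0 -> s <> 0 ->
  Cdiv (Cmult (RtoC r) u) (Cmult (RtoC s) u) = RtoC (r / s).
Proof.
  intros hu hs; pose proof (Cnorm2_pos u hu) as hn.
  destruct u as [x y]; unfold Cnorm2 in hn; simpl in hn.
  assert (0 < s * x * (s * x) + s * y * (s * y)).
  { replace (s * x * (s * x) + s * y * (s * y)) with (s * s * (x * x + y * y)) by ring.
    apply Rmult_lt_0_compat; nra. }
  unfold Cdiv, Cmult, Cinv, Cnorm2, RtoC; simpl; f_equal; field; lra.
Qed.

Lemma Cnorm2_div_scale (r s : R) (u : Cplx) : u <> C0 -> s <> 0 ->
  Cnorm2 (Cmult (RtoC r) u) / Cnorm2 (Cmult (RtoC s) u) = (r / s) ^ 2.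
Proof.
  intros hu hs; pose proof (Cnorm2_pos u hu).
  rewrite !Cnorm2_scale; field; lra.
Qed.

Lemma sin_div_sub_cos_div (u t : R) : sin t <> 0 -> cos t <> 0 ->
  sin (u + t) / sin t - cos (u + t) / cos t = sin u / (sin t * cos t).
Proof.
  intros hs hc.
  replace (sin u) with (sin (u + t - t)) by (f_equal; ring).
  rewrite sin_minus; field; lra.
Qed.

Lemma kk_bounds (theta : R) : 0 < theta ->
  PI / 2 - 2 * theta < 2 * INR (kk theta) * theta <= PI / 2.
Proof.
  intros ht; unfold kk; set (r := PI / (4 * theta)).
  destruct (base_Int_part r) as [hfl hfr].
  assert (0 < r) by (apply Rdiv_lt_0_compat; [apply PI_RGT_0 | lra]).
  assert (hz : (0 <= Int_part r)%Z).
  { apply le_IZR; destruct (Z_lt_le_dec (Int_part r) 0) as [hl | hl].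
    - apply Z.lt_le_pred, IZR_le in hl; simpl in hl; lra.
    - now apply IZR_le in hl. }
  rewrite INR_IZR_INZ, Z2Nat.id by exact hz.
  assert (r * (4 * theta) = PI) by (unfold r; field; lra).
  split; nra.
Qed.

Lemma cos_double_le_sin_kk (theta : R) : 0 < theta < PI / 2 ->
  cos (2 * theta) <= sin (2 * INR (kk theta) * theta) <= 1.
Proof.
  intros ht; pose proof (kk_bounds theta (proj1 ht)).
  split; [| apply SIN_bound].
  rewrite <- sin_shift; apply sin_incr_1; lra.
Qed.

Section Grover.

Variables (N M : nat) (theta : R).
Hypotheses (hM1 : (1 <= M)%nat) (hMN : (M < N)%nat) (htheta : 0 < theta < PI / 2)
  (hsin : sin theta = sqrt (INR M / INR N)).

Let hMpos : 1 <= INR M.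
Proof. now apply (le_INR 1). Qed.
Let hMN_R : INR M < INR N.
Proof. now apply lt_INR. Qed.
Let hNM : INR (N - M) = INR N - INR M.
Proof. apply minus_INR; lia. Qed.
Let hsin_pos : 0 < sin theta.
Proof. apply sin_gt_0; lra. Qed.
Let hcos_pos : 0 < cos theta.
Proof. apply cos_gt_0; lra. Qed.
Let hsqrtN_pos : 0 < sqrt (INR N).
Proof. apply sqrt_lt_R0; lra. Qed.

Lemma INR_M_sin2 : INR M = sin theta ^ 2 * INR N.
Proof.
  rewrite hsin, pow2_sqrt; [field; lra |].
  apply Rmult_le_pos; [lra | left; apply Rinv_0_lt_compat; lra].
Qed.

Lemma INR_N_sub_M_cos2 : INR (N - M) = cos theta ^ 2 * INR N.
Proof.
  rewrite hNM, INR_M_sin2.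
  pose proof (sin2_cos2 theta); unfold Rsqr in *; nra.
Qed.

Lemma sqrt_M_sin : sqrt (INR M) = sin theta * sqrt (INR N).
Proof.
  rewrite INR_M_sin2, sqrt_mult by nra.
  now rewrite <- Rsqr_pow2, sqrt_Rsqr by lra.
Qed.

Lemma sqrt_N_sub_M_cos : sqrt (INR (N - M)) = cos theta * sqrt (INR N).
Proof.
  rewrite INR_N_sub_M_cos2, sqrt_mult by nra.
  now rewrite <- Rsqr_pow2, sqrt_Rsqr by lra.
Qed.

Lemma a_k_sub_b_k (k : nat) :
  a_k M theta k - b_k N M theta k =
  sin (2 * INR k * theta) / (sin theta * cos theta * sqrt (INR N)).
Proof.
  unfold a_k, b_k; rewrite sqrt_M_sin, sqrt_N_sub_M_cos.
  replace ((2 * INR k + 1) * theta) with (2 * INR k * theta + theta) by ring.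
  set (u := 2 * INR k * theta).
  replace (sin u) with ((sin (u + theta) / sin theta - cos (u + theta) / cos theta)
                        * (sin theta * cos theta))
    by (rewrite sin_div_sub_cos_div by lra; field; lra).
  field; lra.
Qed.

Lemma amplitude_ratio (k : nat) :
  (a_k M theta k - b_k N M theta k) / sqrt (INR N) /
  ((- / sqrt (INR N) - / sqrt (INR N)) / sqrt (INR N)) =
  - (INR N / (2 * INR M)) * tan theta * sin (2 * INR k * theta).
Proof.
  rewrite a_k_sub_b_k, INR_M_sin2; unfold tan.
  field; repeat split; lra.
Qed.

Lemma amplitude_ratio_sq (k : nat) :
  (- (INR N / (2 * INR M)) * tan theta * sin (2 * INR k * theta)) ^ 2 =
  INR N / (4 * INR M) * (INR N / INR (N - M)) * sin (2 * INR k * theta) ^ 2.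
Proof.
  rewrite INR_N_sub_M_cos2, INR_M_sin2; unfold tan.
  field; repeat split; lra.
Qed.

Lemma one_sub_2M_div_N : 1 - 2 * INR M / INR N = cos (2 * theta).
Proof. rewrite cos_2a_sin, INR_M_sin2; field; lra. Qed.

Lemma amplified_ratio_bounds (x : R) : 2 * INR M <= INR N ->
  x = INR N / (4 * INR M) * (INR N / INR (N - M)) * sin (2 * INR (kk theta) * theta) ^ 2 ->
  INR N / (4 * INR M) * (INR N / INR (N - M)) * (1 - 2 * INR M / INR N) ^ 2 <= x /\
  x <= INR N / (4 * INR M) * (INR N / INR (N - M)).
Proof.
  intros h2M ->.
  set (F := INR N / (4 * INR M) * (INR N / INR (N - M))).
  assert (hF : 0 <= F).
  { assert (0 < / (4 * INR M)) by (apply Rinv_0_lt_compat; lra).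
    assert (0 < / INR (N - M)) by (rewrite hNM; apply Rinv_0_lt_compat; lra).
    unfold F, Rdiv; apply Rmult_le_pos; apply Rmult_le_pos; lra. }
  pose proof (cos_double_le_sin_kk theta htheta) as [hlo hhi].
  assert (0 <= cos (2 * theta)) by (rewrite cos_2a_sin; pose proof INR_M_sin2; nra).
  rewrite one_sub_2M_div_N.
  split; [apply Rmult_le_compat_l | rewrite <- (Rmult_1_r F) at 2;
                                    apply Rmult_le_compat_l]; nra.
Qed.

End Grover.

Theorem mainTheorem8
  (N M : nat) (A : nat -> bool) (alpha : nat -> nat -> Cplx) (theta : R) (y : nat)
  (hN : (2 <= N)%nat)
  (hA : card_below N A = M)
  (hM1 : (1 <= M)%nat) (hMN : (M < N)%nat)
  (hU : unitary N (Umat N alpha))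
  (htheta : 0 < theta < PI / 2)
  (hsin : sin theta = sqrt (INR M / INR N))
  (hy : (y < N)%nat)
  (hsum0 : Csum N (fun z => alpha y z) = C0)
  (hsumA : Csum N (fun z => if A z then alpha y z else C0) <> C0) :
  let k := kk theta in
  let Upsi := apply N (Umat N alpha) (psi_k N M A theta k) y in
  let Uxi := apply N (Umat N alpha) (xi N A) y in
  let ratio := Cnorm2 Upsi / Cnorm2 Uxi in
  Cdiv Upsi Uxi = RtoC (- (INR N / (2 * INR M)) * tan theta * sin (2 * INR k * theta)) /\
  ratio = (INR N ^ 2 / (4 * INR M ^ 2)) * (tan theta) ^ 2 * (sin (2 * INR k * theta)) ^ 2 /\
  (2 * INR M <= INR N ->
     INR N / (4 * INR M) * (INR N / INR (N - M)) * (1 - 2 * INR M / INR N) ^ 2 <= ratio /\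
     ratio <= INR N / (4 * INR M) * (INR N / INR (N - M))).
Proof.
  (* Only the two row sums at y matter. *)
  intros k Upsi Uxi ratio.
  assert (hM : 1 <= INR M) by now apply (le_INR 1).
  assert (hMN_R : INR M < INR N) by now apply lt_INR.
  assert (hsqrtN : 0 < sqrt (INR N)) by (apply sqrt_lt_R0; lra).
  assert (hs : (- / sqrt (INR N) - / sqrt (INR N)) / sqrt (INR N) <> 0).
  { assert (0 < / sqrt (INR N)) by now apply Rinv_0_lt_compat.
    apply Rmult_integral_contrapositive; split; lra. }
  assert (hUpsi := apply_Umat_two_valued N alpha A (psi_k N M A theta k)
                     (a_k M theta k) (b_k N M theta k) y (fun z => eq_refl) hsum0).
  assert (hUxi := apply_Umat_two_valued N alpha A (xi N A) _ _ y (xi_two_valued N A) hsum0).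
  assert (hratio : ratio = INR N / (4 * INR M) * (INR N / INR (N - M))
                             * sin (2 * INR k * theta) ^ 2).
  { unfold ratio, Upsi, Uxi; rewrite hUpsi, hUxi, Cnorm2_div_scale by assumption.
    now rewrite amplitude_ratio, amplitude_ratio_sq. }
  split; [| split].
  - unfold Upsi, Uxi; rewrite hUpsi, hUxi, Cdiv_scale by assumption.
    now rewrite amplitude_ratio.
  - rewrite hratio, <- amplitude_ratio_sq by assumption; field; lra.
  - intros h2M; now apply (amplified_ratio_bounds N M theta).
Qed.
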